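(* Let $\bar q=(q^2-1)/2$, and define $f$ on residues $t$ modulo $q^2-1$ with $t\not\equiv\bar q$ by the condition $\xi^{-t}+\xi^{f(t)}=-1$; then $f$ is a bijection from the residues $\not\equiv\bar q$ onto themselves. Let $j$ be an integer with $1\le j\le q$. For $t\in\{0,1,\dots,q-2\}$ put $e(t)=f^{-1}(t(q+1)-j)$, a residue modulo $q^2-1$, hence a well-defined residue modulo $q+1$. Then: - the $q-1$ residues $e(0),\dots,e(q-2)$ modulo $q+1$ are pairwise distinct; - none of them is congruent to $0$ or to $j$ modulo $q+1$.
   Context: Let $q$ be an odd prime power, $F=\mathrm{GF}(q^2)$, and let $\xi$ be a fixed primitive element of $F$ (so that $\xi^{\bar q}=-1$). *)

From mathcomp Require Import all_boot all_order all_algebra all_field.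
Set Implicit Arguments. Unset Strict Implicit. Unset Printing Implicit Defensive.
Import GRing.Theory.
Local Open Scope ring_scope.

(* Residues modulo n are represented by their canonical representatives in
   [0, n) (natural numbers). *)

Definition qbar (q : nat) : nat := ((q ^ 2 - 1) %/ 2)%N.

Definition fdom (n qb : nat) : pred nat := fun t => (t < n)%N && (t != qb).

Definition fmap (F : fieldType) (xi : F) (n t : nat) : nat :=
  if [pick u : 'I_n | xi ^- t + xi ^+ u == -1] is Some u then val u else 0%N.

Definition finv (F : fieldType) (xi : F) (n qb u : nat) : nat :=
  if [pick t : 'I_n | (val t != qb) && (fmap xi n t == u)] is Some t
  then val t else 0%N.

(* e(t) = f^{-1}(t(q+1) - j), where the argument is reduced mod n = q^2-1
   (we add n to avoid truncated subtraction; j <= q <= n). *)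
Definition eres (F : fieldType) (xi : F) (q j t : nat) : nat :=
  let n := (q ^ 2 - 1)%N in
  finv xi n (qbar q) ((t * (q + 1) + (n - j)) %% n).

From Pilot Require Import Defs.
From mathcomp Require Import all_boot all_order all_algebra all_field.
From mathcomp Require Import zify ring.
Set Implicit Arguments.
Unset Strict Implicit.
Unset Printing Implicit Defensive.
Import GRing.Theory.
Local Open Scope ring_scope.

(* Let F = GF(q^2), n = q^2 - 1 and xi a primitive element of F, so every
   nonzero element of F is xi^t for a unique residue t mod n, and
   xi^qbar = -1.  The proof has two independent parts.

   1. f is a bijection.  This only uses that xi generates F^* and that n is
      even: xi^-t + xi^u = -1 has a solution u exactly when xi^-t <> -1,
      i.e. t <> qbar, the solution is never qbar, and t is recovered from u.
   2. The residues e(t).  Let K = GF(q) = {x | x^q = x} (a subfield, by the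
      Frobenius) and z = xi^-j.  Then xi^a / xi^b lies in K iff
      a = b mod q+1; in particular z is not in K, so every element has at
      most one expression u + v z with u, v in K.  Writing a_t = xi^(t(q+1))
      (an element of K), the definition of e gives xi^-e(t) = -1 - a_t z,
      and each claim about e(t) mod q+1 becomes a comparison of
      K-coordinates with respect to (1, z). *)

Lemma in_fdom n qb t : (t \in fdom n qb) = (t < n)%N && (t != qb).
Proof. by []. Qed.

(* Part 1: a finite field F with primitive element xi of order n = #|F| - 1,
   where n = 2 qb is even (so that xi^qb = -1). *)
Section PrimitiveElement.
Variables (F : finFieldType) (n qb : nat) (xi : F).
Hypothesis card_F : #|F| = n.+1.
Hypothesis xi_prim : n.-primitive_root xi.
Hypothesis n_half : (qb * 2)%N = n.

Lemma n_gt0 : (0 < n)%N.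
Proof. exact: prim_order_gt0 xi_prim. Qed.

Lemma expxi_neq0 k : xi ^+ k != 0.
Proof. by rewrite expf_neq0 // (prim_root_eq0 xi_prim) -lt0n n_gt0. Qed.

Lemma expxi_inj {a b} : (a < n)%N -> (b < n)%N -> xi ^+ a = xi ^+ b -> a = b.
Proof.
by move=> ha hb /eqP; rewrite (eq_prim_root_expr xi_prim) !modn_small // => /eqP.
Qed.

Lemma expxi_onto {x} : x != 0 -> {i : 'I_n | x = xi ^+ i}.
Proof.
move=> x0; apply: (prim_rootP xi_prim); apply: (mulIf x0).
by rewrite mul1r -exprSr -card_F expf_card.
Qed.

(* -1 is the unique element of order 2: xi^t = -1 exactly for t = qb. *)
Lemma expxi_eqN1 {t} : (t < n)%N -> (xi ^+ t == -1) = (t == qb).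
Proof.
have qb_lt_n : (qb < n)%N by have := n_gt0; lia.
have xi_qb : xi ^+ qb = -1.
  have : (xi ^+ qb) ^+ 2 == 1 by rewrite -exprM n_half prim_expr_order.
  rewrite sqrf_eq1 => /orP[/eqP xi_qb1|/eqP //].
  have : xi ^+ qb = xi ^+ 0 by rewrite xi_qb1 expr0.
  by move/(expxi_inj qb_lt_n n_gt0); have := n_gt0; lia.
move=> ht; apply/eqP/eqP => [|->] //.
by rewrite -xi_qb => /(expxi_inj ht qb_lt_n).
Qed.

(* On the domain, f(t) = fmap xi n t is a residue solving xi^-t + xi^f(t) = -1;
   a solution exists since -1 - xi^-t <> 0 is a power of xi. *)
Lemma fmapP {t} : t \in fdom n qb ->
  xi ^- t + xi ^+ fmap xi n t = -1 /\ (fmap xi n t < n)%N.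
Proof.
rewrite in_fdom => /andP[ht tqb]; rewrite /fmap; case: pickP => [u /eqP -> | none].
  by split; rewrite ?ltn_ord.
have nz : -1 - xi ^- t != 0.
  rewrite subr_eq0; apply: contra tqb => /eqP xiN1.
  by rewrite -(expxi_eqN1 ht) -[xi ^+ t]invrK -xiN1 invrN1.
have [u hu] := expxi_onto nz.
by have := none u; rewrite -hu addrC subrK eqxx.
Qed.

(* f maps the domain into itself: f(t) = qbar would force xi^-t = 0. *)
Lemma fmap_dom {t} : t \in fdom n qb -> fmap xi n t \in fdom n qb.
Proof.
move=> tD; have [sum_ft ft_lt] := fmapP tD.
rewrite in_fdom ft_lt -(expxi_eqN1 ft_lt) /=; apply/eqP => ft_N1.
move: sum_ft; rewrite ft_N1 => /eqP; rewrite -subr_eq0 addrK invr_eq0.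
by rewrite (negbTE (expxi_neq0 t)).
Qed.

(* t is determined by xi^-t = -1 - xi^f(t). *)
Lemma fmap_inj : {in fdom n qb &, injective (fmap xi n)}.
Proof.
move=> t1 t2 t1D t2D ft12; have [sum1 _] := fmapP t1D; have [sum2 _] := fmapP t2D.
move: t1D t2D; rewrite !in_fdom => /andP[lt1 _] /andP[lt2 _].
apply: expxi_inj => //; apply: invr_inj; apply: (addIr (xi ^+ fmap xi n t1)).
by rewrite sum1 ft12 sum2.
Qed.

(* Conversely, for u in the domain, t with xi^-t = -1 - xi^u is a preimage. *)
Lemma fmap_onto {u} : u \in fdom n qb -> exists2 t, t \in fdom n qb & fmap xi n t = u.
Proof.
rewrite in_fdom => /andP[hu uqb].
have nz : (-1 - xi ^+ u)^-1 != 0.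
  rewrite invr_eq0 subr_eq0; apply: contra uqb => /eqP xiN1.
  by rewrite -(expxi_eqN1 hu) -xiN1.
have [t ht] := expxi_onto nz.
have xi_t : xi ^- t = -1 - xi ^+ u by rewrite -ht invrK.
have tD : val t \in fdom n qb.
  rewrite in_fdom ltn_ord -(expxi_eqN1 (ltn_ord t)) /=.
  apply/eqP => xiN1; move: xi_t; rewrite xiN1 invrN1 => xi_u.
  have : xi ^+ u = 0 by apply: oppr_inj; apply: (addrI (-1)); rewrite -xi_u oppr0 addr0.
  by move/eqP; rewrite (negbTE (expxi_neq0 u)).
exists t => //; have [sum_ft ft_lt] := fmapP tD.
by apply: expxi_inj => //; apply: (addrI (xi ^- t)); rewrite sum_ft xi_t subrK.
Qed.

Lemma finvP {u} : u \in fdom n qb ->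
  Defs.finv xi n qb u \in fdom n qb /\ fmap xi n (Defs.finv xi n qb u) = u.
Proof.
move=> uD; rewrite /Defs.finv; case: pickP => [t /andP[tqb /eqP ft] | none].
  by rewrite in_fdom ltn_ord tqb.
have [t tD ft] := fmap_onto uD; move: (tD); rewrite in_fdom => /andP[ht tqb].
by have := none (Ordinal ht); rewrite /= tqb ft eqxx.
Qed.

End PrimitiveElement.

Section Subfield.
Variables (F : finFieldType) (q : nat) (xi : F).
Hypothesis q_gt1 : (1 < q)%N.
Hypothesis char_q : ([pchar F]%R).-nat q.
Hypothesis xi_prim : (q ^ 2 - 1).-primitive_root xi.

Local Notation n := (q ^ 2 - 1)%N.

Lemma n_factor : n = ((q + 1) * (q - 1))%N.
Proof. by rewrite -{2}(exp1n 2) subn_sqr mulnC. Qed.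

Definition in_Fq (x : F) : bool := x ^+ q == x.

Lemma in_Fq1 : in_Fq 1.
Proof. by rewrite /in_Fq expr1n. Qed.

Lemma in_Fq0 : in_Fq 0.
Proof. by rewrite /in_Fq expr0n gtn_eqF // ltnW. Qed.

Lemma in_FqD x y : in_Fq x -> in_Fq y -> in_Fq (x + y).
Proof. by rewrite /in_Fq exprDn_pchar // => /eqP-> /eqP->. Qed.

Lemma in_FqN x : in_Fq x -> in_Fq (- x).
Proof. by rewrite /in_Fq exprNn_pchar // => /eqP->. Qed.

Lemma in_FqM x y : in_Fq x -> in_Fq y -> in_Fq (x * y).
Proof. by rewrite /in_Fq exprMn => /eqP-> /eqP->. Qed.

Lemma in_FqV x : in_Fq x -> in_Fq x^-1.
Proof. by rewrite /in_Fq exprVn => /eqP->. Qed.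

Lemma in_Fq_unity x : x != 0 -> in_Fq x = (x ^+ (q - 1) == 1).
Proof.
move=> x0; rewrite /in_Fq -{1}(subnK (ltnW q_gt1)) exprD expr1.
apply/eqP/eqP => [x_q|->]; last by rewrite mul1r.
by apply: (mulIf x0); rewrite mul1r.
Qed.

(* The criterion linking K to residues modulo q + 1: (xi^a/xi^b)^(q-1) = 1
   iff n = (q+1)(q-1) divides (a-b)(q-1). *)
Lemma in_Fq_expxi_ratio a b : in_Fq (xi ^+ a / xi ^+ b) = (a == b %[mod q + 1]).
Proof.
have xi0 := expxi_neq0 xi_prim.
rewrite in_Fq_unity ?mulf_neq0 ?invr_eq0 // exprMn exprVn -!exprM.
have xib0 := xi0 (b * (q - 1))%N.
transitivity (xi ^+ (a * (q - 1))%N == xi ^+ (b * (q - 1))%N).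
  apply/eqP/eqP => [ratio1|->]; last exact: divff.
  by rewrite -(divfK xib0 (xi ^+ (a * (q - 1))%N)) ratio1 mul1r.
by rewrite (eq_prim_root_expr xi_prim) n_factor -!muln_modl eqn_pmul2r ?subn_gt0.
Qed.

Lemma in_Fq_expxi a : in_Fq (xi ^+ a) = (a == 0 %[mod q + 1]).
Proof. by rewrite -in_Fq_expxi_ratio expr0 divr1. Qed.

Lemma in_Fq_expxi_mul t : in_Fq (xi ^+ (t * (q + 1))).
Proof. by rewrite in_Fq_expxi mod0n modnMl. Qed.

Lemma Fq_coords_unique z u1 v1 u2 v2 : ~~ in_Fq z ->
  in_Fq u1 -> in_Fq v1 -> in_Fq u2 -> in_Fq v2 ->
  u1 + v1 * z = u2 + v2 * z -> u1 = u2 /\ v1 = v2.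
Proof.
move=> zK u1K v1K u2K v2K e.
have [v12|v12] := eqVneq v1 v2; first by move: e; rewrite v12 => /addIr.
have v12_neq0 : v1 - v2 != 0 by rewrite subr_eq0.
have ez : z = (u2 - u1) / (v1 - v2).
  apply: (mulIf v12_neq0); rewrite divfK // -[u2](addrK (v2 * z)) -e; ring.
by move: zK; rewrite ez in_FqM ?in_FqV ?in_FqD ?in_FqN.
Qed.

Section Residues.
Hypothesis card_F : #|F| = (q ^ 2)%N.
Hypothesis q_odd : odd q.
Variable j : nat.
Hypothesis j_range : (1 <= j <= q)%N.

Lemma card_F_pred : #|F| = n.+1.
Proof. by rewrite card_F subn1 prednK // expn_gt0 ltnW. Qed.

Lemma qbar_half : (qbar q * 2)%N = n.
Proof. by rewrite /qbar divnK // n_factor dvdn_mulr // dvdn2 oddD q_odd. Qed.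

(* z = xi^-j is not in K, because j is not 0 modulo q + 1. *)
Lemma xi_j_notin_Fq : ~~ in_Fq (xi ^- j).
Proof.
rewrite -div1r -(expr0 xi) in_Fq_expxi_ratio mod0n modn_small; first by case/andP: j_range; lia.
by rewrite addn1 ltnS; case/andP: j_range.
Qed.

(* The argument t(q+1) - j of f^-1 in e(t), as a residue modulo n;
   xi raised to it is a_t * xi^-j, and it lies in the domain of f^-1
   because a_t z = -1 would have K-coordinates (0, a_t) = (-1, 0). *)
Definition eres_arg (t : nat) : nat := ((t * (q + 1) + (n - j)) %% n)%N.

Lemma expxi_eres_arg t : xi ^+ eres_arg t = xi ^+ (t * (q + 1)) * xi ^- j.
Proof.
rewrite /eres_arg prim_expr_mod // exprD; congr (_ * _).
apply: (mulIf (expxi_neq0 xi_prim j)); rewrite mulVf ?(expxi_neq0 xi_prim) // -exprD subnK ?prim_expr_order //.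
by rewrite n_factor; case/andP: j_range; nia.
Qed.

Lemma eres_arg_dom t : eres_arg t \in fdom n (qbar q).
Proof.
have arg_lt : (eres_arg t < n)%N by rewrite ltn_mod (n_gt0 xi_prim).
rewrite in_fdom arg_lt -(expxi_eqN1 card_F_pred xi_prim qbar_half arg_lt) expxi_eres_arg /=.
apply/eqP => at_zeta.
have coords : 0 + xi ^+ (t * (q + 1)) * xi ^- j = -1 + 0 * xi ^- j.
  by rewrite add0r mul0r addr0.
have [_ at0] := Fq_coords_unique xi_j_notin_Fq in_Fq0 (in_Fq_expxi_mul t)
  (in_FqN in_Fq1) in_Fq0 coords.
by move/eqP: at0; rewrite (negbTE (expxi_neq0 xi_prim _)).
Qed.

Lemma expxi_eres t : xi ^- eres xi q j t = -1 - xi ^+ (t * (q + 1)) * xi ^- j.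
Proof.
have [eD f_e] := finvP card_F_pred xi_prim qbar_half (eres_arg_dom t).
have [sum_e _] := fmapP card_F_pred xi_prim qbar_half eD.
have -> : eres xi q j t = Defs.finv xi n (qbar q) (eres_arg t) by [].
by rewrite -sum_e f_e expxi_eres_arg addrK.
Qed.

(* If e(t1) = e(t2) mod q+1 then c = xi^e(t1) / xi^e(t2) lies in K and
   c (-1 - a_t1 z) = -1 - a_t2 z, so c = 1 and a_t1 = a_t2, whence t1 = t2
   as t (q+1) < n for t <= q - 2. *)
Lemma eres_distinct t1 t2 : (t1 <= q - 2)%N -> (t2 <= q - 2)%N ->
  eres xi q j t1 = eres xi q j t2 %[mod q + 1] -> t1 = t2.
Proof.
move=> t1_le t2_le /eqP e12.
pose c := xi ^+ eres xi q j t1 / xi ^+ eres xi q j t2.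
have cK : in_Fq c by rewrite in_Fq_expxi_ratio.
have c_e : c * xi ^- eres xi q j t1 = xi ^- eres xi q j t2.
  by rewrite mulrAC mulfV ?mul1r ?(expxi_neq0 xi_prim).
have coords : - c + (- (c * xi ^+ (t1 * (q + 1)))) * xi ^- j
            = -1 + (- xi ^+ (t2 * (q + 1))) * xi ^- j.
  transitivity (c * (-1 - xi ^+ (t1 * (q + 1)) * xi ^- j)); first ring.
  by rewrite -expxi_eres c_e expxi_eres; ring.
have [/oppr_inj c1 /oppr_inj ca12] := Fq_coords_unique xi_j_notin_Fq (in_FqN cK)
  (in_FqN (in_FqM cK (in_Fq_expxi_mul t1))) (in_FqN in_Fq1) (in_FqN (in_Fq_expxi_mul t2)) coords.
move: ca12; rewrite c1 mul1r => /(expxi_inj xi_prim) a12.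
suff : (t1 * (q + 1) = t2 * (q + 1))%N by move/eqP; rewrite eqn_pmul2r ?addn1 // => /eqP.
by apply: a12; rewrite n_factor mulnC ltn_pmul2l ?addn1 //; lia.
Qed.

(* If e(t) = 0 mod q+1 then -1 - a_t z = xi^-e(t) lies in K, forcing a_t = 0;
   if e(t) = j mod q+1 then c = xi^e(t) / xi^j lies in K and
   c (-1 - a_t z) = z, forcing c = 0. *)
Lemma eres_avoid t :
  (eres xi q j t %% (q + 1) != 0)%N /\ (eres xi q j t %% (q + 1) != j %% (q + 1))%N.
Proof.
have a_t_K := in_Fq_expxi_mul t.
split; apply/negP => /eqP s_mod.
  have sK : in_Fq (xi ^- eres xi q j t) by apply: in_FqV; rewrite in_Fq_expxi mod0n s_mod.
  have coords : xi ^- eres xi q j t + 0 * xi ^- j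
              = -1 + (- xi ^+ (t * (q + 1))) * xi ^- j.
    by rewrite mul0r addr0 expxi_eres mulNr.
  have [_ a0] := Fq_coords_unique xi_j_notin_Fq sK in_Fq0 (in_FqN in_Fq1)
    (in_FqN a_t_K) coords.
  by move/eqP: a0; rewrite eq_sym oppr_eq0 (negbTE (expxi_neq0 xi_prim _)).
pose c := xi ^+ eres xi q j t / xi ^+ j.
have cK : in_Fq c by rewrite in_Fq_expxi_ratio; apply/eqP.
have c_e : c * xi ^- eres xi q j t = xi ^- j.
  by rewrite mulrAC mulfV ?mul1r ?(expxi_neq0 xi_prim).
have coords : - c + (- (c * xi ^+ (t * (q + 1)))) * xi ^- j = 0 + 1 * xi ^- j.
  transitivity (c * (-1 - xi ^+ (t * (q + 1)) * xi ^- j)); first ring.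
  by rewrite -expxi_eres c_e add0r mul1r.
have [/eqP c0 _] := Fq_coords_unique xi_j_notin_Fq (in_FqN cK)
  (in_FqN (in_FqM cK a_t_K)) in_Fq0 in_Fq1 coords.
by move: c0; rewrite oppr_eq0 mulf_eq0 invr_eq0 !(negbTE (expxi_neq0 xi_prim _)).
Qed.

End Residues.

End Subfield.

Lemma prime_power_card (F : finFieldType) (p k : nat) :
  prime p -> (0 < k)%N -> #|F| = ((p ^ k) ^ 2)%N ->
  (1 < p ^ k)%N /\ ([pchar F]%R).-nat (p ^ k)%N.
Proof.
move=> p_pr k_gt0 card_F; split.
  by rewrite (leq_trans (prime_gt1 p_pr)) // -{1}(expn1 p) leq_exp2l ?prime_gt1.
have chp : p \in [pchar F].
  by apply: (card_finPcharP (n := (k * 2)%N)); rewrite // card_F -expnM.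
by rewrite (eq_pnat _ (pcharf_eq chp)) pnatX pnat_id.
Qed.

Theorem lemma8 (q : nat) (Hqodd : odd q)
  (Hqpp : exists p k : nat, [/\ prime p, (0 < k)%N & q = (p ^ k)%N])
  (F : finFieldType) (HF : #|F| = (q ^ 2)%N)
  (xi : F) (Hxi : (q ^ 2 - 1).-primitive_root xi)
  (j : nat) (Hj : (1 <= j <= q)%N) :
  let n := (q ^ 2 - 1)%N in
  let D := fdom n (qbar q) in
  (* f is a bijection of the residues not congruent to qbar *)
  [/\ {in D, forall t, fmap xi n t \in D},
      {in D &, injective (fmap xi n)},
      {in D, forall u, exists2 t, t \in D & fmap xi n t = u},
  (* the residues e(0), ..., e(q-2) modulo q+1 are pairwise distinct *)
      (forall t1 t2 : nat, (t1 <= q - 2)%N -> (t2 <= q - 2)%N ->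
         eres xi q j t1 = eres xi q j t2 %[mod q + 1] -> t1 = t2) &
  (* none of them is congruent to 0 or j modulo q+1 *)
      (forall t : nat, (t <= q - 2)%N ->
         (eres xi q j t %% (q + 1) != 0)%N /\
         (eres xi q j t %% (q + 1) != j %% (q + 1))%N)].
Proof.
have [p [k [p_pr k_gt0 q_pk]]] := Hqpp.
have [q_gt1 char_q] : (1 < q)%N /\ ([pchar F]%R).-nat q.
  by rewrite q_pk; apply: prime_power_card; rewrite -?q_pk.
have card_F := card_F_pred q_gt1 HF.
have n_half := qbar_half Hqodd.
move=> n D; rewrite {}/D {}/n; split.
- move=> t; exact: (fmap_dom card_F Hxi n_half).
- exact: fmap_inj card_F Hxi n_half.
- move=> u; exact: (fmap_onto card_F Hxi n_half).
- move=> t1 t2; exact: (eres_distinct q_gt1 char_q Hxi HF Hqodd Hj).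
- move=> t _; exact: (eres_avoid q_gt1 char_q Hxi HF Hqodd Hj t).
Qed.
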